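(* Assume the standing hypotheses (H). Let $A$ be a part of $G$ with $|A|=3$, let $\{u,v\}\subseteq A$ be a good pair for $A$, and let $x$ be the third vertex of $A$. Then \[\bigl|L(x)\cup (L(u)\cap L(v))\bigr|\ \ge\ k+\frac{k_3}{3}+k_4 .\]
   Context: A list assignment $L$ assigns to each vertex $v$ a set $L(v)$ of colors; an $L$-coloring is a proper coloring $f$ with $f(v)\in L(v)$ for all $v$; $\mathrm{ch}$ denotes choice number and $\chi$ chromatic number. A part of a complete multipartite graph is one of its maximal stable sets. Standing hypotheses (H): $k\ge1$ and $n\ge 2k+2$ are integers; $G$ is a complete $k$-partite graph (exactly $k$ nonempty parts) on $n$ vertices; $L$ is a list assignment for $G$ with $|L(v)|\ge\lceil (n+k-1)/3\rceil$ for every vertex $v$; $G$ has no $L$-coloring; $\left|\bigcup_{v\in V(G)}L(v)\right|\le n-1$; and every graph $H$ with fewer than $n$ vertices satisfies $\mathrm{ch}(H)\le\max\{\chi(H),\lceil(|V(H)|+\chi(H)-1)/3\rceil\}$. For $i\in\{1,2,3,4\}$, $k_i$ denotes the number of parts of $G$ of size $i$. For a part $A$ with $|A|\ge3$, a pair $\{u,v\}\subseteq A$ of distinct vertices is a good pair for $A$ if either $|A|=3$ and $|L(u)\cap L(v)|\ge\frac{k_1+k_4+1}{3}$, or $|A|=4$ and $|L(u)\cap L(v)|\ge|L(w)\cap L(z)|$ where $\{w,z\}=A\setminus\{u,v\}$. *)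

From mathcomp Require Import all_boot.
Set Implicit Arguments. Unset Strict Implicit. Unset Printing Implicit Defensive.

(* A (simple) graph is a symmetric irreflexive relation e on a finType T. *)

Definition colorableb (T : finType) (e : rel T) (c : nat) : bool :=
  [exists f : {ffun T -> 'I_c}, [forall x, forall y, e x y ==> (f x != f y)]].

Lemma colorable_card (T : finType) (e : rel T) :
  irreflexive e -> exists c, colorableb e c.
Proof.
move=> irr; exists #|T|; apply/existsP; exists [ffun x => enum_rank x].
apply/forallP=> x; apply/forallP=> y; apply/implyP=> exy.
rewrite !ffunE; apply/negP=> /eqP/enum_rank_inj Exy.
by move: exy; rewrite Exy irr.
Qed.

Definition chi (T : finType) (e : rel T) (irr : irreflexive e) : nat :=
  ex_minn (colorable_card irr).

Definition Lcoloring (T C : finType) (e : rel T) (L : T -> {set C}) (f : T -> C) : Prop :=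
  (forall v, f v \in L v) /\ (forall x y, e x y -> f x != f y).

Definition choosable (T : finType) (e : rel T) (m : nat) : Prop :=
  forall (C : finType) (L : T -> {set C}),
    (forall v, m <= #|L v|) -> exists f : T -> C, Lcoloring e L f.

(* complete multipartite graph on 'I_n with part function p : 'I_n -> 'I_k *)
Definition cmp_edge (n k : nat) (p : 'I_n -> 'I_k) : rel 'I_n :=
  fun u v => p u != p v.

Definition part (n k : nat) (p : 'I_n -> 'I_k) (j : 'I_k) : {set 'I_n} :=
  [set v | p v == j].

Definition nparts (n k : nat) (p : 'I_n -> 'I_k) (i : nat) : nat :=
  #|[set j : 'I_k | #|part p j| == i]|.

From mathcomp Require Import all_boot.
From mathcomp Require Import zify.

Set Implicit Arguments.
Unset Strict Implicit.
Unset Printing Implicit Defensive.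

(* Let A = {u, v, x} be the part of size 3.
   1. No colour c lies in the lists of all vertices of a part A with
      |A| >= 3: otherwise remove c from every other list and A from G.  The
      remaining graph has fewer than n vertices and chromatic number <= k,
      so by minimality it is colourable from lists of size
      >= ceil((n+k-1)/3) - 1 >= max(k, ceil((n-3+k-1)/3)); colouring all of
      A with c then L-colours G, a contradiction.
   2. Hence L(x) and L(u) ∩ L(v) are disjoint, and
      |L(x) ∪ (L(u) ∩ L(v))| = |L(x)| + |L(u) ∩ L(v)|
      >= (n+k+1)/3 + (k_1+k_4+1)/3   (list size and good pair).
   3. Counting part sizes (every part is nonempty) gives
      2k + k_3 + 2k_4 <= n + k_1, and the bound follows by arithmetic. *)

Lemma card_set_indicator (I : finType) (P : pred I) :
  #|[set j | P j]| = \sum_(j : I) (P j : nat).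
Proof.
rewrite -sum1_card big_mkcond /=; apply: eq_bigr => j _.
by rewrite inE; case: (P j).
Qed.

Section PartCounting.

Variables (n k : nat) (p : 'I_n -> 'I_k).

Lemma sum_part_sizes : n = \sum_(j : 'I_k) #|part p j|.
Proof.
transitivity (\sum_(w : 'I_n) 1); first by rewrite sum1_card card_ord.
rewrite (partition_big p xpredT) //=; apply: eq_bigr => j _.
by rewrite -sum1_card; apply: eq_bigl => w; rewrite inE.
Qed.

Lemma nparts_sum (i : nat) :
  nparts p i = \sum_(j : 'I_k) (#|part p j| == i : nat).
Proof. by rewrite /nparts card_set_indicator. Qed.

(* When all parts are nonempty, 2 <= |A| + [|A| = 1] - [|A| = 3] - 2[|A| = 4]
   for every part A; summing over the parts gives 2k + k_3 + 2k_4 <= n + k_1. *)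
Lemma part_count_bound :
  (forall j : 'I_k, exists w : 'I_n, p w = j) ->
  2 * k + nparts p 3 + 2 * nparts p 4 <= n + nparts p 1.
Proof.
move=> hsurj; rewrite !nparts_sum; have n_sum := sum_part_sizes.
suff : 2 * k + \sum_(j : 'I_k) (#|part p j| == 3 : nat)
         + 2 * \sum_(j : 'I_k) (#|part p j| == 4 : nat)
       <= \sum_(j : 'I_k) #|part p j| + \sum_(j : 'I_k) (#|part p j| == 1 : nat)
  by lia.
have -> : 2 * k = \sum_(j : 'I_k) 2 by rewrite sum_nat_const card_ord mulnC.
rewrite big_distrr /= -!big_split /=; apply: leq_sum => j _.
have : 0 < #|part p j|.
  by have [w hw] := hsurj j; apply/card_gt0P; exists w; rewrite inE hw.
by case: #|part p j| => [|[|[|[|[|s]]]]].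
Qed.

Lemma part3_members (a : 'I_k) (u v x : 'I_n) :
  #|part p a| = 3 -> p u = a -> p v = a -> p x = a ->
  u != v -> x != u -> x != v -> part p a = [set u; v; x].
Proof.
move=> ha hu hv hx huv hxu hxv; apply/esym/eqP.
have sub : [set u; v; x] \subset part p a.
  by apply/subsetP => y; rewrite !inE => /orP[/orP[]|] /eqP ->;
     rewrite ?hu ?hv ?hx.
have card3 : #|[set u; v; x]| = 3.
  by rewrite setUC cardsU1 cards2 !inE huv (negbTE hxu) (negbTE hxv).
by rewrite eqEcard sub ha card3.
Qed.

End PartCounting.

Lemma chi_le_coloring (T : finType) (e : rel T) (irr : irreflexive e)
    (c : nat) (q : T -> 'I_c) :
  (forall w y, e w y -> q w != q y) -> chi irr <= c.
Proof.
move=> qP; rewrite /chi; case: ex_minnP => m _; apply.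
apply/existsP; exists [ffun w => q w].
apply/forallP => w; apply/forallP => y; apply/implyP => ewy.
by rewrite !ffunE qP.
Qed.

(* Arithmetic core of the minimality argument: removing one colour from a
   list of size >= ceil((n+k-1)/3) still leaves enough colours for a graph
   with at most n - 3 vertices and chromatic number at most k. *)
Lemma reduced_list_bound (n k s ch l : nat) :
  2 * k + 2 <= n -> 3 <= s -> ch <= k -> (n + k + 1) %/ 3 <= l ->
  maxn ch ((n - s + ch + 1) %/ 3) <= l - 1.
Proof. by move=> *; rewrite geq_max; apply/andP; split; lia. Qed.

Section ColourCommonToAPart.

Variables (n k : nat) (p : 'I_n -> 'I_k) (C : finType) (L : 'I_n -> {set C}).
Variables (a : 'I_k) (c : C).

Definition outside_part : finType := {w : 'I_n | p w != a}.

Definition outside_edge : rel outside_part :=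
  fun w y => cmp_edge p (val w) (val y).

(* If c lies in every list of part a, a colouring of G - a avoiding c
   extends to an L-colouring of G by giving colour c to all of part a. *)
Lemma extend_by_common_colour (f : outside_part -> C) :
  (forall w, p w = a -> c \in L w) ->
  Lcoloring outside_edge (fun w => L (val w) :\ c) f ->
  exists g : 'I_n -> C, Lcoloring (cmp_edge p) L g.
Proof.
move=> hc [fL fP].
exists (fun w => if insub w is Some w' then f w' else c); split.
  move=> w; case: insubP => [w' _ <-|/negbNE/eqP]; last exact: hc.
  by have := fL w'; rewrite inE => /andP[].
move=> w y; rewrite /cmp_edge => hwy.
case: (insubP outside_part w) => [w' _ ew|hw];
case: (insubP outside_part y) => [y' _ ey|hy]; try subst w; try subst y.
- exact: fP.
- by move: (fL w'); rewrite !inE => /andP[].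
- by move: (fL y'); rewrite !inE eq_sym => /andP[].
- by move: hw hy hwy => /negbNE/eqP -> /negbNE/eqP ->; rewrite eqxx.
Qed.

Lemma no_common_colour :
  2 * k + 2 <= n ->
  (forall w, (n + k + 1) %/ 3 <= #|L w|) ->
  ~ (exists g : 'I_n -> C, Lcoloring (cmp_edge p) L g) ->
  (forall (T : finType) (e : rel T) (sym : symmetric e) (irr : irreflexive e),
      #|T| < n -> choosable e (maxn (chi irr) ((#|T| + chi irr + 1) %/ 3))) ->
  3 <= #|part p a| -> (forall w, p w = a -> c \in L w) -> False.
Proof.
move=> hn hL hnocol hmin ha hc.
have sym : symmetric outside_edge by move=> w y; rewrite /outside_edge /cmp_edge eq_sym.
have irr : irreflexive outside_edge by move=> w; rewrite /outside_edge /cmp_edge eqxx.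
have cardT : #|outside_part| = n - #|part p a|.
  have := cardsCs (~: part p a); rewrite setCK card_ord => <-.
  by rewrite /outside_part card_sig; apply: eq_card => w; rewrite !inE.
have small : #|outside_part| < n by rewrite cardT; lia.
have hchi : chi irr <= k by apply: (@chi_le_coloring _ _ irr k (p \o val)).
have [f hf] : exists f, Lcoloring outside_edge (fun w => L (val w) :\ c) f.
  apply: (hmin _ _ sym irr small) => w; rewrite cardT.
  apply: leq_trans (reduced_list_bound hn ha hchi (hL (val w))) _.
  by rewrite leq_subLR (cardsD1 c (L (val w))) leq_add2r leq_b1.
exact/hnocol/(extend_by_common_colour hc hf).
Qed.

End ColourCommonToAPart.

Theorem lemma23 (n k : nat) (p : 'I_n -> 'I_k) (C : finType)
  (L : 'I_n -> {set C})
  (hk : 1 <= k) (hn : 2 * k + 2 <= n)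
  (hsurj : forall j : 'I_k, exists v : 'I_n, p v = j)
  (hL : forall v, (n + k + 1) %/ 3 <= #|L v|)
  (hnocol : ~ exists f : 'I_n -> C, Lcoloring (cmp_edge p) L f)
  (hunion : #|\bigcup_(v : 'I_n) L v| <= n - 1)
  (hmin : forall (T : finType) (e : rel T) (sym : symmetric e) (irr : irreflexive e),
      #|T| < n -> choosable e (maxn (chi irr) ((#|T| + chi irr + 1) %/ 3)))
  (a : 'I_k) (ha : #|part p a| = 3)
  (u v x : 'I_n) (hu : p u = a) (hv : p v = a) (hx : p x = a)
  (huv : u != v) (hxu : x != u) (hxv : x != v)
  (hgood : nparts p 1 + nparts p 4 + 1 <= 3 * #|L u :&: L v|) :
  3 * k + nparts p 3 + 3 * nparts p 4 <= 3 * #|L x :|: (L u :&: L v)|.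
Proof.
have hdisj : L x :&: (L u :&: L v) = set0.
  apply/setP => c; rewrite in_set0; apply/negbTE/negP => hc.
  apply: (@no_common_colour n k p C L a c hn hL hnocol hmin); first by rewrite ha.
  move=> w hw; have : w \in part p a by rewrite inE hw.
  rewrite (part3_members ha hu hv hx huv hxu hxv) !inE.
  by move: hc; rewrite !inE => /and3P[? ? ?] /orP[/orP[]|] /eqP ->.
have -> : #|L x :|: (L u :&: L v)| = #|L x| + #|L u :&: L v|
  by rewrite -cardsUI hdisj cards0 addn0.
(* |L(x)| >= (n+k+1)/3, the good pair and 2k + k_3 + 2k_4 <= n + k_1. *)
have := hL x; have := part_count_bound hsurj; lia.
Qed.
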